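(* For every $\beta > 0$ there exists a constant $C_0 > 0$ such that the following holds. Let $\mathcal{G}$ be a graph on $n$ vertices with maximum degree at most $d$. If $e(\mathcal{G}) \geqslant 4\beta d n$, then for every $C \geqslant C_0$, $$I(\mathcal{G},m) \leqslant \Big( n^{-Cd} + e^{-\beta m}\Big)\binom{n}{m}$$ for every $m \geqslant C\sqrt{n\log n}$.
   Context: $e(\mathcal{G})$ is the number of edges of $\mathcal{G}$ and $I(\mathcal{G},m)$ is the number of independent sets of size $m$ in $\mathcal{G}$. $\log$ is the natural logarithm. *)

From mathcomp Require Import all_boot.
From Stdlib Require Import Reals.
Set Implicit Arguments. Unset Strict Implicit. Unset Printing Implicit Defensive.

Definition simple_graph (T : finType) (e : rel T) : Prop :=
  symmetric e /\ irreflexive e.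

Definition deg (T : finType) (e : rel T) (x : T) : nat := #|[set y | e x y]|.

Definition nedges (T : finType) (e : rel T) : nat :=
  #|[set A : {set T} | [exists x, exists y, e x y && (A == [set x; y])]]|.

Definition independent (T : finType) (e : rel T) (A : {set T}) : bool :=
  [forall x in A, forall y in A, ~~ e x y].

Definition nindep (T : finType) (e : rel T) (m : nat) : nat :=
  #|[set A : {set T} | independent e A && (#|A| == m)]|.

(* Let p = m/n and let S be a p-random set of vertices.  The binomial distribution of |S| has
   its mode at m, so P(|S| = m) >= 1/(n+1); as every independent m-set is S with probability
   p^m (1-p)^(n-m), I(G,m) <= (n+1) C(n,m) P(S is independent).  To bound the latter, expose
   the vertices one at a time, forbidding the neighbours of every chosen vertex.  With the
   threshold R = 5 beta n / 4, either R forbidden vertices are met, which has probability at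
   most (1-p)^R <= e^(-5 beta m / 4), or every exposed free vertex with k free neighbours
   contributes a factor (1-p) + p(1-p)^k <= exp(-gamma k), gamma = p^2/(1+pd), and all edges
   but the at most 2dR touching forbidden vertices get charged, giving exp(-gamma (e(G) - 2dR)).
   For C >= 12/beta + 2 both terms are below (n^(-Cd) + e^(-beta m))/(n+1). *)

From mathcomp Require Import all_boot zify.
From Stdlib Require Import Reals Lra.

Set Implicit Arguments.
Unset Strict Implicit.
Unset Printing Implicit Defensive.

Lemma count_uniq_card (T : finType) (a : pred T) (l : seq T) :
  uniq l -> count a l = #|[set w | (w \in l) && a w]|.
Proof.
move=> ul; rewrite -size_filter -(card_uniqP (filter_uniq _ ul)).
by apply: eq_card => w; rewrite inE mem_filter andbC.
Qed.

Lemma count_split (A : Type) (a b : pred A) (l : seq A) :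
  count a l = count (fun x => a x && b x) l + count (fun x => a x && ~~ b x) l.
Proof. by elim: l => //= x l ->; case: (a x) (b x) => [] [] /=; lia. Qed.

Section ForwardEdges.
Variables (T : finType) (e : rel T) (d : nat).
Hypothesis esym : symmetric e.
Hypothesis eirr : irreflexive e.
Hypothesis hdeg : forall x : T, deg e x <= d.

(* For duplicate-free [l]: the number of edges inside [l] whose later endpoint satisfies [h]. *)
Fixpoint fwd_edges (l : seq T) (h : pred T) : nat :=
  if l is v :: l' then count (fun w => h w && e v w) l' + fwd_edges l' h else 0.

Lemma fwd_edgesU l h1 h2 : fwd_edges l (fun w => h1 w || h2 w) <=
  fwd_edges l h1 + fwd_edges l (fun w => h2 w && ~~ h1 w).
Proof.
elim: l => //= v l IH.
have := count_predUI (fun w => h1 w && e v w) (fun w => (h2 w && ~~ h1 w) && e v w) l.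
rewrite (@eq_count _ _ (fun w => (h1 w || h2 w) && e v w)) => [|w /=]; last first.
  by case: (h1 w) (h2 w) (e v w) => [] [] [].
lia.
Qed.

Lemma fwd_edges_pred0 l : fwd_edges l pred0 = 0.
Proof. by elim: l => //= v l ->; rewrite addn0 (@eq_count _ _ pred0) ?count_pred0. Qed.

Lemma count_adj_le l v : uniq l -> count (e v) l <= d.
Proof.
move=> ul; rewrite count_uniq_card //; apply: leq_trans (hdeg v).
by apply: subset_leq_card; apply/subsetP => w; rewrite !inE => /andP[].
Qed.

Lemma fwd_edges_le_sum l h :
  fwd_edges l h <= \sum_(w <- l | h w) count (e^~ w) l.
Proof.
elim: l => [|u l IH] /=; first by rewrite big_nil.
have count_sum : count (fun w => h w && e u w) l = \sum_(w <- l | h w) e u w.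
  by rewrite -sum1_count big_mkcondr.
apply: (@leq_trans (\sum_(w <- l | h w) count (e^~ w) (u :: l))).
  by rewrite big_split count_sum leq_add2l.
by rewrite big_cons; case: (h u) => //; exact: leq_addl.
Qed.

Lemma fwd_edges_le l h : uniq l -> fwd_edges l h <= d * count h l.
Proof.
move=> ul; apply: leq_trans (fwd_edges_le_sum l h) _.
rewrite -sum1_count big_distrr leq_sum // => w _.
by rewrite /= muln1 (eq_count (a2 := e w)) ?count_adj_le // => v /=; rewrite esym.
Qed.

Definition edges_in (l : seq T) : {set {set T}} :=
  [set A | [exists x, exists y, [&& x \in l, y \in l, e x y & A == [set x; y]]]].

Lemma edges_in_cons v l : edges_in (v :: l) \subset
  edges_in l :|: [set [set v; w] | w in [set w | (w \in l) && e v w]].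
Proof.
apply/subsetP => A; rewrite !inE => /existsP[x /existsP[y /and4P[xl yl exy /eqP ->]]].
move: xl yl exy; rewrite !inE.
case: (eqVneq x v) => [->|xv] /=.
  case: (eqVneq y v) => [->|yv] /=; first by rewrite eirr.
  by move=> _ yl evy; apply/orP; right; apply/imsetP; exists y; rewrite ?inE ?yl.
move=> xl; case: (eqVneq y v) => [-> _ exv|yv /= yl exy].
  by apply/orP; right; apply/imsetP; exists x; rewrite ?inE ?xl 1?esym // setUC.
apply/orP; left; apply/existsP; exists x; apply/existsP; exists y.
by rewrite xl yl exy eqxx.
Qed.

Lemma card_edges_in l : uniq l -> #|edges_in l| <= fwd_edges l predT.
Proof.
elim: l => [_|v l IH /andP[_ ul]] /=.
  rewrite leqn0 cards_eq0; apply/eqP/setP => A; rewrite !inE.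
  by apply/negbTE/negP => /existsP[x /existsP[y]].
apply: leq_trans (subset_leq_card (edges_in_cons v l)) _.
rewrite cardsU addnC; apply: leq_trans (leq_subr _ _) _.
rewrite leq_add ?IH //; apply: leq_trans (leq_imset_card _ _) _.
by rewrite count_uniq_card.
Qed.

Lemma nedges_le_fwd_edges : nedges e <= fwd_edges (enum T) predT.
Proof.
apply: leq_trans (card_edges_in (enum_uniq T)); apply: subset_leq_card.
apply/subsetP => A; rewrite !inE => /existsP[x /existsP[y /andP[exy /eqP ->]]].
by apply/existsP; exists x; apply/existsP; exists y; rewrite !mem_enum exy eqxx.
Qed.
End ForwardEdges.

Section IndepSets.
Variables (T : finType) (e : rel T).

Definition indep_sets_in (l : seq T) (f : pred T) (k : nat) : {set {set T}} :=
  [set A : {set T} |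
    [&& [forall a in A, (a \in l) && ~~ f a], independent e A & #|A| == k]].

Lemma indep_sets_in_small l f k : size l < k -> indep_sets_in l f k = set0.
Proof.
move=> hk; apply/setP => A; rewrite !inE; apply/negbTE/negP.
case/and3P=> /forallP hA _ /eqP hAk.
have : #|A| <= size l.
  apply: leq_trans (card_size l); apply: subset_leq_card; apply/subsetP => a aA.
  by have /andP[] := implyP (hA a) aA.
by rewrite hAk leqNgt hk.
Qed.

Lemma card_indep_sets_in_nil f : #|indep_sets_in [::] f 0| <= 1.
Proof.
rewrite -(cards1 (set0 : {set T})); apply: subset_leq_card; apply/subsetP => A.
by rewrite !inE => /and3P[_ _ /eqP /cards0_eq ->].
Qed.

Lemma card_indep_sets_in_cons v l f k : v \notin l ->
  #|indep_sets_in (v :: l) f k| <= #|indep_sets_in l f k| +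
     (if k is k'.+1 then
        (if f v then 0 else #|indep_sets_in l (fun w => f w || e v w) k'|)
      else 0).
Proof.
move=> vl; rewrite -(cardsID [set A : {set T} | v \in A]) addnC.
apply: leq_add.
  apply: subset_leq_card; apply/subsetP => A.
  rewrite !inE => /andP[vA /and3P[/forallP hA ind hk]].
  apply/and3P; split => //; apply/forallP => a; apply/implyP => aA.
  have := hA a; rewrite aA /= inE => /andP[/orP[/eqP av|al] ->]; last by rewrite al.
  by move: vA; rewrite -av aA.
case: k => [|k].
  rewrite leqn0 cards_eq0; apply/eqP/setP => A; rewrite !inE.
  by apply/negbTE/negP => /andP[/and3P[_ _ /eqP /cards0_eq ->]]; rewrite inE.
case fv: (f v).
  rewrite leqn0 cards_eq0; apply/eqP/setP => A; rewrite !inE.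
  apply/negbTE/negP => /andP[/and3P[/forallP hA _ _] vA].
  by have := hA v; rewrite vA fv andbF.
set S := (_ :&: _).
have inj : {in S &, injective (fun A : {set T} => A :\ v)}.
  move=> A B; rewrite !inE => /andP[_ vA] /andP[_ vB] h.
  by rewrite -(setD1K vA) -(setD1K vB) h.
rewrite -(card_in_imset inj); apply: subset_leq_card; apply/subsetP => B.
case/imsetP => A; rewrite !inE => /andP[/and3P[/forallP hA /forallP ind /eqP hAk] vA] ->.
apply/and3P; split.
- apply/forallP => a; apply/implyP; rewrite !inE => /andP[av aA].
  have := hA a; rewrite aA /= inE (negbTE av) /= => /andP[al nfa].
  rewrite al /= negb_or nfa /=.
  by have := ind v; rewrite vA /= => /forallP /(_ a); rewrite aA.
- apply/forallP => x; apply/implyP; rewrite inE => /andP[_ xA].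
  apply/forallP => y; apply/implyP; rewrite inE => /andP[_ yA].
  by have := ind x; rewrite xA /= => /forallP /(_ y); rewrite yA.
- by move: hAk; rewrite (cardsD1 v A) vA add1n => -[->].
Qed.

Lemma nindep_le_card_indep_sets m : nindep e m <= #|indep_sets_in (enum T) pred0 m|.
Proof.
apply: subset_leq_card; apply/subsetP => A; rewrite !inE => /andP[ind hk].
by apply/and3P; split => //; apply/forallP => a; apply/implyP => _; rewrite mem_enum.
Qed.
End IndepSets.

Lemma nindep_le_binomial (T : finType) (e : rel T) m : nindep e m <= 'C(#|T|, m).
Proof.
rewrite /nindep -card_draws; apply: subset_leq_card; apply/subsetP => A.
by rewrite !inE => /andP[_ ->].
Qed.

Lemma nindep_gt_card (T : finType) (e : rel T) m : #|T| < m -> nindep e m = 0.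
Proof. by move=> hm; apply/eqP; rewrite -leqn0 -(bin_small hm) nindep_le_binomial. Qed.

Lemma nindep_card_eq0 (T : finType) (e : rel T) : 0 < nedges e -> nindep e #|T| = 0.
Proof.
rewrite card_gt0 => /set0Pn[B]; rewrite inE => /existsP[x /existsP[y /andP[exy _]]].
apply/eqP; rewrite cards_eq0; apply/eqP/setP => A; rewrite !inE.
apply/negbTE/negP => /andP[ind /eqP hA].
have AT : A = setT by apply/eqP; rewrite eqEcard subsetT cardsT hA leqnn.
move: ind; rewrite AT => /forallP /(_ x) /implyP /(_ (in_setT x)) /forallP /(_ y).
by rewrite in_setT exy.
Qed.

Local Open Scope R_scope.

Lemma exp_le_exp x y : x <= y -> exp x <= exp y.
Proof.
by case/Rle_lt_or_eq_dec => [/exp_increasing/Rlt_le|->] //; exact: Rle_refl.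
Qed.

Lemma ln_le x y : 0 < x -> x <= y -> ln x <= ln y.
Proof.
by move=> x0; case/Rle_lt_or_eq_dec => [/(ln_increasing _ _ x0)/Rlt_le|->] //; exact: Rle_refl.
Qed.

Lemma mul_exp_le A x y : 0 < A -> ln A <= x - y -> A * exp (- x) <= exp (- y).
Proof.
by move=> A0 h; rewrite -{1}(exp_ln A A0) -exp_plus; apply: exp_le_exp; lra.
Qed.

Lemma Rpower_ge1 x y : 0 < x <= 1 -> y <= 0 -> 1 <= Rpower x y.
Proof.
move=> [x0 x1] y0; rewrite -exp_0 /Rpower; apply: exp_le_exp.
by have := ln_le x0 x1; rewrite ln_1; nra.
Qed.

(* Stdlib's [ln] is 0 outside (0, +oo), so [Rpower 0 x = 1]. *)
Lemma Rpower_INR_le1 n x : (n <= 1)%nat -> Rpower (INR n) x = 1.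
Proof.
case: n => [|[|//]] _; rewrite /Rpower; last by rewrite /= ln_1 Rmult_0_r exp_0.
rewrite /ln; case: (Rlt_dec 0 (INR 0)) => [/Rlt_irrefl //|_].
by rewrite Rmult_0_r exp_0.
Qed.

Section IndepProb.
Variables (T : finType) (e : rel T) (p : R).
Hypotheses (hp0 : 0 < p) (hp1 : p < 1).

(* The probability that a p-random subset of [l] is independent and avoids [f]. *)
Fixpoint indep_prob (l : seq T) (f : pred T) : R :=
  if l is v :: l' then
    (1 - p) * indep_prob l' f +
    (if f v then 0 else p * indep_prob l' (fun w => f w || e v w))
  else 1.

Lemma indep_prob_ge0 l f : 0 <= indep_prob l f.
Proof.
elim: l f => [|v l IH] f /=; first lra.
have := IH f; have := IH (fun w => f w || e v w); case: (f v); nra.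
Qed.

Lemma indep_prob_ge_card l f (k j : nat) : uniq l -> (k + j)%nat = size l ->
  p ^ k * (1 - p) ^ j * INR #|indep_sets_in e l f k| <= indep_prob l f.
Proof.
elim: l f k j => [|v l IH] f k j /=.
  move=> _; case: k j => [|//] [|//] _.
  by have := le_INR _ _ (leP (card_indep_sets_in_nil e f)); rewrite /=; lra.
case/andP => vl ul hkj.
have := le_INR _ _ (leP (@card_indep_sets_in_cons T e v l f k vl)); rewrite plus_INR.
have skip : p ^ k * (1 - p) ^ j * INR #|indep_sets_in e l f k| <= (1 - p) * indep_prob l f.
  case: j hkj => [|j] hkj.
    rewrite indep_sets_in_small ?cards0 /= ?Rmult_0_r; last by lia.
    by apply: Rmult_le_pos; [lra | exact: indep_prob_ge0].
  have -> : p ^ k * (1 - p) ^ j.+1 * INR #|indep_sets_in e l f k| =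
            (1 - p) * (p ^ k * (1 - p) ^ j * INR #|indep_sets_in e l f k|).
    by rewrite /=; ring.
  by apply: Rmult_le_compat_l; [lra | apply: IH => //; move: hkj; rewrite addnS; case].
have weight_ge0 : 0 <= p ^ k * (1 - p) ^ j.
  by apply: Rmult_le_pos; apply: pow_le; lra.
move=> /(Rmult_le_compat_l _ _ _ weight_ge0) rec; apply: Rle_trans rec _.
rewrite Rmult_plus_distr_l; apply: Rplus_le_compat => //.
have take_ge0 f' : 0 <= p * indep_prob l f'.
  by apply: Rmult_le_pos; [lra | exact: indep_prob_ge0].
case: k hkj {skip} weight_ge0 => [|k] hkj weight_ge0.
  by rewrite Rmult_0_r; case: (f v) => //; lra.
case: (f v); first by rewrite Rmult_0_r; lra.
have -> : p ^ k.+1 * (1 - p) ^ j = p * (p ^ k * (1 - p) ^ j) by rewrite /=; ring.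
by rewrite Rmult_assoc; apply: Rmult_le_compat_l; [lra | apply: IH => //; case: hkj].
Qed.
End IndepProb.

Section UpperBound.
Variables (T : finType) (e : rel T) (d : nat) (p Rt : R).
Hypothesis esym : symmetric e.
Hypothesis hdeg : forall x : T, (deg e x <= d)%nat.
Hypotheses (hp0 : 0 < p) (hp1 : p < 1).

Definition decay := p ^ 2 / (1 + p * INR d).

Lemma decay_ge0 : 0 <= decay.
Proof.
apply: Rmult_le_pos; first by apply: pow_le; lra.
by apply/Rlt_le/Rinv_0_lt_compat; have := pos_INR d; nra.
Qed.

Lemma bernoulli_pow k : (1 - p) ^ k * (1 + p * INR k) <= 1.
Proof.
elim: k => [|k IH]; first by rewrite /=; lra.
rewrite S_INR /=.
have : 0 <= (1 - p) ^ k * (p * p * (INR k + 1)).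
  by apply: Rmult_le_pos; [apply: pow_le; lra | have := pos_INR k; nra].
nra.
Qed.

Lemma step_factor_le1 (k : nat) : (k <= d)%nat ->
  ((1 - p) + p * (1 - p) ^ k) * exp (decay * INR k) <= 1.
Proof.
move=> /leP/le_INR kd; have k0 := pos_INR k.
have pk0 : 0 < 1 + p * INR k by nra.
have qk : (1 - p) ^ k <= / (1 + p * INR k).
  apply: (Rmult_le_reg_r (1 + p * INR k)) => //.
  by rewrite Rinv_l; [exact: bernoulli_pow | lra].
have rate : decay * INR k <= p * (p * INR k) / (1 + p * INR k).
  have -> : decay * INR k = p * (p * INR k) * / (1 + p * INR d).
    by rewrite /decay /Rdiv /=; ring.
  by apply: Rmult_le_compat_l; [nra | apply: Rinv_le_contravar; nra].
have factor : (1 - p) + p * (1 - p) ^ k <= 1 - decay * INR k.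
  have : p * (1 - p) ^ k <= p * / (1 + p * INR k) by apply: Rmult_le_compat_l; lra.
  have : p * / (1 + p * INR k) = p - p * (p * INR k) / (1 + p * INR k) by field; lra.
  lra.
have := exp_ineq1_le (- (decay * INR k)); have := exp_pos (decay * INR k).
have : exp (- (decay * INR k)) * exp (decay * INR k) = 1.
  by rewrite -exp_plus Rplus_opp_l exp_0.
nra.
Qed.

(* The invariant of the exposure process, where [phi] vertices were already skipped because
   they were forbidden.  Either more than [Rt - phi] further forbidden vertices are met, at cost
   (1-p)^(Rt-phi), or each free vertex with k free neighbours costs exp (- decay * k)
   ([step_factor_le1]), which charges every edge except at most d per forbidden vertex. *)
Definition excess (l : seq T) (f : pred T) (phi : nat) : R :=
  INR (fwd_edges e l predT) - INR (fwd_edges e l f) - 2 * INR d * (Rt - INR phi)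
  + INR d * INR (count f l).

Definition indep_prob_bound (l : seq T) (f : pred T) (phi : nat) : R :=
  Rpower (1 - p) (Rt - INR phi) + (1 - p) ^ count f l * exp (- (decay * excess l f phi)).

Lemma indep_prob_bound_nil f phi : 1 <= indep_prob_bound [::] f phi.
Proof.
rewrite /indep_prob_bound /excess /=.
have := exp_pos (- (decay * (0 - 0 - 2 * INR d * (Rt - INR phi) + INR d * 0))).
have := exp_pos ((Rt - INR phi) * ln (1 - p)); rewrite -/(Rpower _ _).
case: (Rle_lt_dec Rt (INR phi)) => h.
  by have := @Rpower_ge1 (1 - p) (Rt - INR phi) (ltac:(lra)) (ltac:(lra)); lra.
suff : 1 <= exp (- (decay * (0 - 0 - 2 * INR d * (Rt - INR phi) + INR d * 0))) by lra.
rewrite -exp_0; apply: exp_le_exp.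
have : 0 <= decay * (INR d * (Rt - INR phi)).
  by apply: Rmult_le_pos; [exact: decay_ge0 | apply: Rmult_le_pos; [exact: pos_INR | lra]].
lra.
Qed.

Lemma Rpower_pred x : (1 - p) * Rpower (1 - p) (x - 1) = Rpower (1 - p) x.
Proof.
rewrite -{1}[1 - p]Rpower_1 -?Rpower_plus; last lra.
by congr Rpower; ring.
Qed.

Lemma indep_prob_bound_forced v l (f : pred T) (phi : nat) : uniq l -> f v ->
  (1 - p) * indep_prob_bound l f phi.+1 <= indep_prob_bound (v :: l) f phi.
Proof.
move=> ul fv.
have hc : count f (v :: l) = (count f l).+1 by rewrite /= fv.
have hex : excess (v :: l) f phi <= excess l f phi.+1.
  have hcd : (count (fun w => predT w && e v w) l <= d)%nat by exact: count_adj_le.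
  have := le_INR _ _ (leP hcd); have := pos_INR (count (fun w => f w && e v w) l).
  rewrite /excess hc !S_INR /= !plus_INR; lra.
have hq : (1 - p) * Rpower (1 - p) (Rt - INR phi.+1) = Rpower (1 - p) (Rt - INR phi).
  by rewrite -(Rpower_pred (Rt - INR phi)) S_INR; congr (_ * Rpower _ _); ring.
rewrite /indep_prob_bound Rmult_plus_distr_l hq hc.
apply: Rplus_le_compat_l; rewrite -Rmult_assoc; apply: Rmult_le_compat_l.
  by apply: Rmult_le_pos; [lra | apply: pow_le; lra].
by apply: exp_le_exp; apply: Ropp_le_contravar; apply: Rmult_le_compat_l => //; exact: decay_ge0.
Qed.

Lemma count_forbid v l (f : pred T) :
  count (fun w => f w || e v w) l = (count f l + count (fun w => e v w && ~~ f w) l)%nat.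
Proof.
rewrite (count_split (fun w => f w || e v w) f).
by congr addn; apply: eq_count => w /=; case: (f w) (e v w) => [] [].
Qed.

Lemma excess_cons_free v l (f : pred T) phi : ~~ f v ->
  excess (v :: l) f phi = excess l f phi + INR (count (fun w => e v w && ~~ f w) l).
Proof.
move=> nfv.
have hce : count (e v) l = (count (fun w => e v w && ~~ f w) l +
                            count (fun w => f w && e v w) l)%nat.
  rewrite (count_split (e v) (fun w => ~~ f w)).
  by congr addn; apply: eq_count => w /=; case: (f w) (e v w) => [] [].
by rewrite /excess /= (negbTE nfv) hce !plus_INR; ring.
Qed.

Lemma excess_le_forbid v l (f : pred T) phi : uniq l ->
  excess l f phi <= excess l (fun w => f w || e v w) phi.
Proof.
move=> ul.
have : (fwd_edges e l (fun w => f w || e v w) <=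
        fwd_edges e l f + d * count (fun w => e v w && ~~ f w) l)%nat.
  by apply: leq_trans (fwd_edgesU e l f (e v)) _; rewrite leq_add2l fwd_edges_le.
move/leP/le_INR; rewrite /excess count_forbid !plus_INR mult_INR; lra.
Qed.

Lemma indep_prob_bound_free v l (f : pred T) (phi : nat) : uniq l -> ~~ f v ->
  (1 - p) * indep_prob_bound l f phi + p * indep_prob_bound l (fun w => f w || e v w) phi <=
  indep_prob_bound (v :: l) f phi.
Proof.
move=> ul nfv.
pose k := count (fun w => e v w && ~~ f w) l.
have hkd : (k <= d)%nat.
  by apply: leq_trans (count_adj_le hdeg v ul); apply: sub_count => w /andP[].
have e1 : exp (- (decay * excess l f phi)) =
          exp (- (decay * excess (v :: l) f phi)) * exp (decay * INR k).
  by rewrite (excess_cons_free _ _ nfv) -exp_plus /k; congr exp; ring.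
have e2 : exp (- (decay * excess l (fun w => f w || e v w) phi)) <=
          exp (- (decay * excess (v :: l) f phi)) * exp (decay * INR k).
  rewrite -e1; apply: exp_le_exp; apply: Ropp_le_contravar.
  by apply: Rmult_le_compat_l; [exact: decay_ge0 | exact: excess_le_forbid].
have hc : count f (v :: l) = count f l by rewrite /= (negbTE nfv).
rewrite /indep_prob_bound hc count_forbid -/k pow_add e1.
have Qk0 : 0 <= (1 - p) ^ count f l * (1 - p) ^ k.
  by apply: Rmult_le_pos; apply: pow_le; lra.
have QY0 : 0 <= (1 - p) ^ count f l * exp (- (decay * excess (v :: l) f phi)).
  by apply: Rmult_le_pos; [apply: pow_le; lra | apply: Rlt_le; apply: exp_pos].
have := Rmult_le_compat_l _ _ _ QY0 (step_factor_le1 hkd).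
have := Rmult_le_compat_l _ _ _ (Rlt_le _ _ hp0) (Rmult_le_compat_l _ _ _ Qk0 e2).
lra.
Qed.

Lemma indep_prob_bound_pred0 l : indep_prob_bound l pred0 0 =
  Rpower (1 - p) Rt + exp (- (decay * (INR (fwd_edges e l predT) - 2 * INR d * Rt))).
Proof.
rewrite /indep_prob_bound /excess fwd_edges_pred0 count_pred0 /=.
by congr (Rpower _ _ + _); [ring | rewrite Rmult_1_l; congr (exp (- (_ * _))); ring].
Qed.

Lemma indep_prob_le_bound l f phi : uniq l -> indep_prob e p l f <= indep_prob_bound l f phi.
Proof.
elim: l f phi => [|v l IH] f phi /=; first by move=> _; exact: indep_prob_bound_nil.
case/andP => _ ul; case fv: (f v).
  rewrite Rplus_0_r; apply: Rle_trans (indep_prob_bound_forced phi ul fv).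
  by apply: Rmult_le_compat_l; [lra | exact: IH].
apply: Rle_trans (indep_prob_bound_free phi ul (negbT fv)).
by apply: Rplus_le_compat; apply: Rmult_le_compat_l; try lra; exact: IH.
Qed.
End UpperBound.

Lemma INR_binomial n k : (k <= n)%nat -> Binomial.C n k = INR 'C(n, k).
Proof.
have fact_INR i : INR (Factorial.fact i) = INR i`!.
  by congr INR; elim: i => // i IH; rewrite fact_simpl factS IH.
move=> kn; rewrite /Binomial.C !fact_INR.
have f0 i : 0 < INR i`! by apply: lt_0_INR; apply/ltP; exact: fact_gt0.
have := f0 k; have := f0 (n - k)%coq_nat.
have -> : INR n`! = INR 'C(n, k) * (INR k`! * INR ((n - k)%coq_nat)`!).
  by rewrite -(bin_fact kn) !mult_INR.
move=> ? ?; field; lra.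
Qed.

Section BinomialMode.
Variables n m : nat.
Hypotheses (hm0 : (0 < m)%nat) (hmn : (m < n)%nat).

Definition ratio := INR m / INR n.

Definition binom_pmf k := INR 'C(n, k) * ratio ^ k * (1 - ratio) ^ (n - k).

Lemma ratio_bounds : 0 < ratio < 1.
Proof.
have m0 : 0 < INR m by apply: lt_0_INR; apply/ltP.
have mn : INR m < INR n by apply: lt_INR; apply/ltP.
split; first by apply: Rdiv_lt_0_compat; lra.
by apply: (Rmult_lt_reg_r (INR n)); rewrite /ratio /Rdiv ?Rmult_assoc ?Rinv_l; lra.
Qed.

Lemma binom_pmf_ge0 k : 0 <= binom_pmf k.
Proof.
have [r0 r1] := ratio_bounds.
apply: Rmult_le_pos; [apply: Rmult_le_pos; [exact: pos_INR|] |]; apply: pow_le; lra.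
Qed.

Lemma binom_pmf_succ k : (k < n)%nat ->
  INR k.+1 * (INR n - INR m) * binom_pmf k.+1 = (INR n - INR k) * INR m * binom_pmf k.
Proof.
move=> kn.
have hbin : INR k.+1 * INR 'C(n, k.+1) = (INR n - INR k) * INR 'C(n, k).
  have := congr1 INR (mul_bin_left n k); rewrite -!multE -minusE !mult_INR minus_INR //.
  by apply/leP; exact: ltnW.
have n0 : 0 < INR n by apply: lt_0_INR; apply/ltP; lia.
have hq : (1 - ratio) * INR n = INR n - INR m by rewrite /ratio; field; lra.
rewrite /binom_pmf; have -> : (n - k = (n - k.+1).+1)%nat by lia.
rewrite /=; set q := (1 - ratio) ^ (n - k.+1).
have -> : INR k.+1 * (INR n - INR m) * (INR 'C(n, k.+1) * (ratio * ratio ^ k) * q) =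
          (INR k.+1 * INR 'C(n, k.+1)) * (INR n - INR m) * ratio * ratio ^ k * q by ring.
rewrite hbin -hq.
have -> : INR m = ratio * INR n by rewrite /ratio; field; lra.
ring.
Qed.

Lemma binom_pmf_incr k : (k < m)%nat -> binom_pmf k <= binom_pmf k.+1.
Proof.
move=> km; have := binom_pmf_succ (ltn_trans km hmn); rewrite S_INR => hr.
have := le_INR _ _ (leP km); have := lt_INR _ _ (ltP hmn); rewrite S_INR => ? ?.
have := pos_INR k; have := binom_pmf_ge0 k => ? ?.
apply: (Rmult_le_reg_l ((INR k + 1) * (INR n - INR m))); first nra.
by rewrite hr; apply: Rmult_le_compat_r => //; nra.
Qed.

Lemma binom_pmf_decr k : (m <= k < n)%nat -> binom_pmf k.+1 <= binom_pmf k.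
Proof.
case/andP => mk kn; have := binom_pmf_succ kn; rewrite S_INR => hr.
have := le_INR _ _ (leP mk); have := lt_INR _ _ (ltP kn) => ? ?.
have := lt_INR _ _ (ltP hmn); have := pos_INR m; have := binom_pmf_ge0 k => ? ? ?.
apply: (Rmult_le_reg_l ((INR k + 1) * (INR n - INR m))); first nra.
by rewrite hr; apply: Rmult_le_compat_r => //; nra.
Qed.

Lemma binom_pmf_le_mode k : (k <= n)%nat -> binom_pmf k <= binom_pmf m.
Proof.
move=> kn; case: (leqP k m) => [km|mk].
  have down i : (i <= m)%nat -> binom_pmf (m - i) <= binom_pmf m.
    elim: i => [|i IH] hi; first by rewrite subn0; lra.
    apply: Rle_trans (IH (ltnW hi)).
    have -> : (m - i = (m - i.+1).+1)%nat by lia.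
    by apply: binom_pmf_incr; lia.
  by rewrite -(subKn km); apply: down; exact: leq_subr.
have up i : (m + i <= n)%nat -> binom_pmf (m + i) <= binom_pmf m.
  elim: i => [|i IH] hi; first by rewrite addn0; lra.
  apply: Rle_trans (IH (ltnW _)); last by rewrite -addnS.
  by rewrite addnS; apply: binom_pmf_decr; lia.
by rewrite -(subnKC (ltnW mk)); apply: up; rewrite subnKC //; exact: ltnW.
Qed.

Lemma binom_pmf_mode_ge : 1 <= INR n.+1 * binom_pmf m.
Proof.
have [r0 r1] := ratio_bounds.
have := Binomial.binomial ratio (1 - ratio) n.
have -> : ratio + (1 - ratio) = 1 by ring.
rewrite pow1 => ->; rewrite Rmult_comm -sum_cte.
apply: sum_Rle => k /leP kn; rewrite INR_binomial //; exact: binom_pmf_le_mode.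
Qed.
End BinomialMode.

Section Analytic.
Variables beta C N M D E p : R.
Hypotheses (hb : 0 < beta) (hbC : 12 <= beta * C) (hC : 2 <= C) (hN : 2 <= N) (hD : 1 <= D).
Hypotheses (hp : 0 < p < 1) (hpN : p * N = M).
Hypothesis hsq : C * sqrt (N * ln N) <= M.
Hypothesis hE : 4 * beta * D * N <= E.

Lemma ln_N_gt0 : 0 < ln N.
Proof. by rewrite -ln_1; apply: ln_increasing; lra. Qed.

Lemma M_sq_ge : C * C * (N * ln N) <= M * M.
Proof.
have hL := ln_N_gt0; have NL : 0 <= N * ln N by nra.
rewrite -(sqrt_sqrt _ NL).
have : 0 <= C * sqrt (N * ln N) by apply: Rmult_le_pos; [lra | exact: sqrt_pos].
nra.
Qed.

Lemma ln_N_le_M : 12 * ln N <= beta * M.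
Proof.
have hL := ln_N_gt0.
have hLN : ln N <= N by have := exp_ineq1_le (ln N); rewrite exp_ln; lra.
have : ln N <= sqrt (N * ln N).
  by rewrite -{1}(sqrt_square (ln N)); [apply: sqrt_le_1_alt; nra | lra].
have : beta * (C * sqrt (N * ln N)) <= beta * M by apply: Rmult_le_compat_l; lra.
nra.
Qed.

Lemma ln_2N1_le_M : ln (2 * (N + 1)) <= beta * M / 4.
Proof.
have hL := ln_N_gt0; have := ln_N_le_M.
have : ln (2 * (N + 1)) <= ln (N * N * N) by apply: ln_le; nra.
by rewrite !ln_mult; nra.
Qed.

Lemma Rpower_term_le : (N + 1) * Rpower (1 - p) (5 * beta * N / 4) <= / 2 * exp (- (beta * M)).
Proof.
have hlq : ln (1 - p) <= - p.
  by rewrite -(ln_exp (- p)); apply: ln_le; [lra | have := exp_ineq1_le (- p); lra].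
have : Rpower (1 - p) (5 * beta * N / 4) <= exp (- (5 * beta * M / 4)).
  apply: exp_le_exp; rewrite -hpN.
  have : 0 <= 5 * beta * N / 4 by nra.
  nra.
have : 2 * (N + 1) * exp (- (5 * beta * M / 4)) <= exp (- (beta * M)).
  by apply: mul_exp_le; [lra | have := ln_2N1_le_M; lra].
have := exp_pos (- (5 * beta * M / 4)); nra.
Qed.

Lemma decay_term_le :
  (N + 1) * exp (- (p ^ 2 / (1 + p * D) * (E - 2 * D * (5 * beta * N / 4)))) <=
  Rpower N (- (C * D)) + / 2 * exp (- (beta * M)).
Proof.
set g := p ^ 2 / (1 + p * D).
have hL := ln_N_gt0.
have g0 : 0 <= g.
  by apply: Rmult_le_pos; [apply: pow_le; lra | apply/Rlt_le/Rinv_0_lt_compat; nra].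
have hE' : 3 / 2 * beta * D * N <= E - 2 * D * (5 * beta * N / 4) by lra.
have hX : exp (- (g * (E - 2 * D * (5 * beta * N / 4)))) <=
          exp (- (g * (3 / 2 * beta * D * N))).
  by apply: exp_le_exp; have := Rmult_le_compat_l _ _ _ g0 hE'; lra.
have pos := exp_pos (- (g * (E - 2 * D * (5 * beta * N / 4)))).
have := exp_pos (- (C * D) * ln N); have := exp_pos (- (beta * M)); rewrite /Rpower.
have bDN : 0 <= 3 / 2 * beta * D * N by apply: Rmult_le_pos; [nra | lra].
case: (Rle_lt_dec 8 (p * D)) => hpD.
- have hg : 8 * p / (9 * D) <= g.
    have : g - 8 * p / (9 * D) = p * (p * D - 8) / (9 * D * (1 + p * D)).
      by rewrite /g /=; field; nra.
    have : 0 <= p * (p * D - 8) / (9 * D * (1 + p * D)).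
      by apply: Rmult_le_pos; [nra | apply/Rlt_le/Rinv_0_lt_compat; nra].
    lra.
  have hY : 4 / 3 * beta * M <= g * (3 / 2 * beta * D * N).
    have : 8 * p / (9 * D) * (3 / 2 * beta * D * N) = 4 / 3 * beta * M.
      by rewrite -hpN; field; lra.
    by have := Rmult_le_compat_r _ _ _ bDN hg; lra.
  have : 2 * (N + 1) * exp (- (4 / 3 * beta * M)) <= exp (- (beta * M)).
    by apply: mul_exp_le; [lra | have := ln_2N1_le_M; have := ln_N_le_M; lra].
  have : exp (- (g * (3 / 2 * beta * D * N))) <= exp (- (4 / 3 * beta * M)).
    by apply: exp_le_exp; lra.
  have := exp_pos (- (4 / 3 * beta * M)); nra.
- have hg : p ^ 2 / 9 <= g.
    rewrite /g /Rdiv; apply: Rmult_le_compat_l; first by apply: pow_le; lra.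
    by apply: Rinv_le_contravar; nra.
  have hY : beta * D * C * C * ln N / 6 <= g * (3 / 2 * beta * D * N).
    have : p ^ 2 / 9 * (3 / 2 * beta * D * N) = beta * D * (M * M) / (6 * N).
      by rewrite -hpN /=; field; lra.
    have : beta * D * C * C * ln N / 6 <= beta * D * (M * M) / (6 * N).
      apply: (Rmult_le_reg_r (6 * N)); first lra.
      have -> : beta * D * (M * M) / (6 * N) * (6 * N) = beta * D * (M * M) by field; lra.
      have -> : beta * D * C * C * ln N / 6 * (6 * N) = beta * D * (C * C * (N * ln N)) by field.
      by apply: Rmult_le_compat_l; [nra | exact: M_sq_ge].
    by have := Rmult_le_compat_r _ _ _ bDN hg; lra.
  have hlnN : ln (N + 1) <= 2 * ln N.
    have : ln (N + 1) <= ln (N * N) by apply: ln_le; nra.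
    by rewrite ln_mult; lra.
  have hCD : C * D * ln N + 2 * ln N <= beta * D * C * C * ln N / 6.
    have : 2 * C <= beta * C * C / 6 by nra.
    have : 0 <= D * ln N by nra.
    nra.
  have : (N + 1) * exp (- (g * (3 / 2 * beta * D * N))) <= exp (- (C * D) * ln N).
    by rewrite Ropp_mult_distr_l_reverse; apply: mul_exp_le; lra.
  have := exp_pos (- (g * (3 / 2 * beta * D * N))); nra.
Qed.

Lemma analytic_bound :
  (N + 1) * (Rpower (1 - p) (5 * beta * N / 4) +
             exp (- (p ^ 2 / (1 + p * D) * (E - 2 * D * (5 * beta * N / 4))))) <=
  Rpower N (- (C * D)) + exp (- (beta * M)).
Proof. by have := Rpower_term_le; have := decay_term_le; lra. Qed.

End Analytic.

Lemma le_mul_of_mode_weight (I Cn Q P K B : R) :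
  0 <= I -> 0 <= Cn -> 0 <= K -> 1 <= K * (Cn * Q) -> Q * I <= P -> K * P <= B ->
  I <= B * Cn.
Proof.
move=> I0 Cn0 K0 mode QI KP.
have : I * 1 <= I * (K * (Cn * Q)) by apply: Rmult_le_compat_l.
have : K * Cn * (Q * I) <= K * Cn * P by apply: Rmult_le_compat_l => //; nra.
have : Cn * (K * P) <= Cn * B by apply: Rmult_le_compat_l.
nra.
Qed.

Lemma nindep_le_trivial (T : finType) (e : rel T) m x y :
  1 <= x -> 0 <= y -> INR (nindep e m) <= (x + y) * INR 'C(#|T|, m).
Proof.
move=> x1 y0; have := le_INR _ _ (leP (nindep_le_binomial e m)).
have := pos_INR 'C(#|T|, m); nra.
Qed.

Lemma nindep_bound_lt (T : finType) (e : rel T) (d m : nat) (beta C : R) :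
  simple_graph e -> (forall x : T, (deg e x <= d)%nat) ->
  0 < beta -> 12 <= beta * C -> 2 <= C ->
  (0 < d)%nat -> (1 < #|T|)%nat -> (m < #|T|)%nat ->
  4 * beta * INR d * INR #|T| <= INR (nedges e) ->
  C * sqrt (INR #|T| * ln (INR #|T|)) <= INR m ->
  INR (nindep e m) <=
    (Rpower (INR #|T|) (- (C * INR d)) + exp (- (beta * INR m))) * INR 'C(#|T|, m).
Proof.
move=> [esym eirr] hdeg hb hbC hC hd hn hmn hE hm.
set n := #|T| in hn hmn hE hm *.
have hN : 2 <= INR n by apply: (le_INR 2); apply/leP.
have hD : 1 <= INR d by apply: (le_INR 1); apply/leP.
have hm0 : (0 < m)%nat.
  apply/ltP/INR_lt; rewrite /=; apply: Rlt_le_trans hm.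
  by apply: Rmult_lt_0_compat; [lra | apply: sqrt_lt_R0; have := ln_N_gt0 hN; nra].
have [p0 p1] := ratio_bounds hm0 hmn; set p := ratio n m in p0 p1.
have hpN : p * INR n = INR m by rewrite /p /ratio; field; lra.
have hlow : p ^ m * (1 - p) ^ (n - m) * INR (nindep e m) <= indep_prob e p (enum T) pred0.
  have sz : (m + (n - m))%nat = size (enum T) by rewrite -cardE /n subnKC // ltnW.
  apply: Rle_trans (@indep_prob_ge_card T e p p0 p1 _ pred0 m (n - m) (enum_uniq T) sz).
  apply: Rmult_le_compat_l; first by apply: Rmult_le_pos; apply: pow_le; lra.
  exact/le_INR/leP/nindep_le_card_indep_sets.
have hup := indep_prob_le_bound (5 * beta * INR n / 4) esym hdeg p0 p1 pred0 0 (enum_uniq T).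
rewrite indep_prob_bound_pred0 in hup.
have hE' : 4 * beta * INR d * INR n <= INR (fwd_edges e (enum T) predT).
  by apply: Rle_trans hE _; apply/le_INR/leP; exact: nedges_le_fwd_edges.
have analytic := analytic_bound hb hbC hC hN hD (conj p0 p1) hpN hm hE'.
have mode := binom_pmf_mode_ge hm0 hmn; rewrite /binom_pmf -/p S_INR Rmult_assoc in mode.
rewrite /decay in hup.
apply: le_mul_of_mode_weight mode (Rle_trans _ _ _ hlow hup) analytic; try exact: pos_INR.
lra.
Qed.
(* Once Reals is loaded, [%N] delimits BinNat's scope, so the statement below must be
   parsed with [nat_scope] as the innermost open scope. *)
Local Close Scope R_scope.

Theorem lemma5p5 :
  forall beta : R, (0 < beta)%R ->
  exists C0 : R, (0 < C0)%R /\
  forall (T : finType) (e : rel T), simple_graph e ->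
  forall d : nat, (forall x : T, deg e x <= d)%N ->
  (INR (nedges e) >= 4 * beta * INR d * INR #|T|)%R ->
  forall C : R, (C >= C0)%R ->
  forall m : nat, (INR m >= C * sqrt (INR #|T| * ln (INR #|T|)))%R ->
  (INR (nindep e m) <=
     (Rpower (INR #|T|) (- (C * INR d)) + exp (- (beta * INR m))) * INR 'C(#|T|, m))%R.
Proof.
Local Open Scope R_scope.
move=> beta hb; have b12 : 0 < 12 / beta by apply: Rdiv_lt_0_compat; lra.
exists (12 / beta + 2); split; first lra.
move=> T e ge d hdeg hE C hC m hm.
have hbC : 12 <= beta * C.
  have : beta * (12 / beta + 2) <= beta * C by apply: Rmult_le_compat_l; lra.
  have : beta * (12 / beta) = 12 by field; lra.
  lra.
have hexp := Rlt_le _ _ (exp_pos (- (beta * INR m))).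
have [d0 | hd] := posnP d.
  by apply: nindep_le_trivial hexp; rewrite d0 /Rpower /= Rmult_0_r Ropp_0 Rmult_0_l exp_0; lra.
have [n1 | hn] := leqP #|T| 1.
  by apply: nindep_le_trivial hexp; rewrite Rpower_INR_le1 //; lra.
have [hmn | ->] : (m < #|T|)%nat \/ nindep e m = 0%nat.
  case: (ltngtP m #|T|) => hmn; [by left | right; exact: nindep_gt_card | right].
  rewrite hmn; apply: nindep_card_eq0; apply/ltP/INR_lt; apply: Rlt_le_trans (Rge_le _ _ hE).
  have := lt_INR _ _ (ltP hd); have := lt_INR _ _ (ltP hn) => /= n1 d0.
  by apply: Rmult_lt_0_compat; [nra | lra].
- by apply: nindep_bound_lt; rewrite //; lra.
- apply: Rmult_le_pos; last exact: pos_INR.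
  by have := exp_pos (- (C * INR d) * ln (INR #|T|)); rewrite /Rpower; lra.
Qed.
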